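(* Let $p$ be an odd prime and $1\le\ell\le p-1$ with Legendre symbol $\left(\frac{8\ell+1}{p}\right)=-1$. Then for all $n,k\ge0$, $$b\!\left(4p^{2k+3}n+\frac{(8\ell+1)p^{2k+2}-1}{2}\right)\equiv 0\pmod 8.$$
   Context: The mock theta function $\mathcal{B}(q)=\sum_{n\ge0}\frac{q^n(-q;q^2)_n}{(q;q^2)_{n+1}}=\sum_{n\ge0}b(n)q^n$, where $(a;q)_n=\prod_{j=0}^{n-1}(1-aq^j)$. *)

From HB Require Import structures.
From mathcomp Require Import all_boot all_order all_algebra.
Set Implicit Arguments. Unset Strict Implicit. Unset Printing Implicit Defensive.
Import Order.TTheory GRing.Theory Num.Theory.
Local Open Scope ring_scope.

(* Formal power series in q with integer coefficients, as coefficient functions. *)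
Definition ps := nat -> int.

Definition pmul (f g : ps) : ps := fun n => \sum_(i < n.+1) f i * g (n - i)%N.
Definition pone : ps := fun n => ((n == 0)%N)%:R.
Definition pX (k : nat) : ps := fun n => ((n == k)%N)%:R.
(* 1 + q^k  (used for k >= 1) *)
Definition opq (k : nat) : ps := fun n => ((n == 0)%N)%:R + ((n == k)%N)%:R.
(* 1/(1 - q^k) = sum_t q^(k t)  (used for k >= 1) *)
Definition geom (k : nat) : ps := fun n => ((k %| n)%N)%:R.

Definition pprod (s : seq ps) : ps := foldr pmul pone s.

(* (-q;q^2)_m = prod_{j<m} (1 + q^(2j+1)) *)
Definition mq_poch (m : nat) : ps := pprod [seq opq (2 * j).+1 | j <- iota 0 m].
(* 1/(q;q^2)_{m+1} = prod_{j<=m} 1/(1 - q^(2j+1)) *)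
Definition inv_q_poch (m : nat) : ps := pprod [seq geom (2 * j).+1 | j <- iota 0 m.+1].

Definition Bterm (m : nat) : ps := pmul (pX m) (pmul (mq_poch m) (inv_q_poch m)).

(* b(n): coefficient of q^n in B(q); summands with m > n have order >= m > n. *)
Definition b (n : nat) : int := \sum_(m < n.+1) Bterm m n.

Definition legendre (a p : nat) : int :=
  if (p %| a)%N then 0
  else if [exists x : 'I_p, (x ^ 2 == a %[mod p])%N] then 1 else -1.

(* Write x_n = q^(2n+1) and B_n(q) = sum_k x_n^k (-x_n;q^2)_k / (x_n;q^2)_(k+1), so that
   B = B_0.  Telescoping the summands of B_n gives
     (1 - x_n)^2 B_n = 1 + x_n^2 + q^2 x_n^2 (1 + x_n)^2 B_(n+1),
   and iterating,
     B = sum_n q^(2n(n+1)) prod_(j<n) ((1 + x_j)/(1 - x_j))^2 * (1 + x_n^2)/(1 - x_n)^2.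
   Since ((1 + x)/(1 - x))^2 = 1 + 4x/(1 - x)^2, (1 + x^2)/(1 - x)^2 = 1 + 2x/(1 - x)^2, and the
   coefficient of q^((2j+1)c) in x_j/(1 - x_j)^2 is c, the coefficient b(e) with 4 | e is
   congruent mod 8 to the number of n with e = 2n(n+1); it vanishes mod 8 unless 2e+1 is a
   square.  For the index e of the theorem, 2e+1 = p^(2k+2) (8pn + 8l + 1) is not a square,
   because 8pn + 8l + 1 is congruent to the non-residue 8l + 1 modulo p.
   Power series are handled through their truncations below some degree K, as polynomials. *)

From HB Require Import structures.
From mathcomp Require Import all_boot all_order all_algebra.
From mathcomp Require Import ring zify.
From Stdlib Require Import Setoid.
Import Order.TTheory GRing.Theory Num.Theory.
Local Open Scope ring_scope.

Definition trunc_eq (R : nzRingType) (K : nat) (p q : {poly R}) :=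
  forall i, (i < K)%N -> p`_i = q`_i.
Arguments trunc_eq {R} K p q.

Lemma trunc_eq_refl R K : Reflexive (@trunc_eq R K).
Proof. by move=> p i. Qed.

Lemma trunc_eq_sym R K : Symmetric (@trunc_eq R K).
Proof. by move=> p q hpq i /hpq. Qed.

Lemma trunc_eq_trans R K : Transitive (@trunc_eq R K).
Proof. by move=> p q r hpq hqr i hi; rewrite hpq ?hqr. Qed.

Add Parametric Relation (R : nzRingType) K : {poly R} (@trunc_eq R K)
  reflexivity proved by (@trunc_eq_refl R K)
  symmetry proved by (@trunc_eq_sym R K)
  transitivity proved by (@trunc_eq_trans R K) as trunc_eq_rel.

Add Parametric Morphism (R : nzRingType) K : (@GRing.add {poly R})
  with signature @trunc_eq R K ==> @trunc_eq R K ==> @trunc_eq R K as trunc_eq_add.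
Proof. by move=> p p' hp q q' hq i hi; rewrite !coefD hp ?hq. Qed.

Add Parametric Morphism (R : nzRingType) K : (@GRing.opp {poly R})
  with signature @trunc_eq R K ==> @trunc_eq R K as trunc_eq_opp.
Proof. by move=> p p' hp i hi; rewrite !coefN hp. Qed.

Add Parametric Morphism (R : nzRingType) K : (@GRing.natmul {poly R})
  with signature @trunc_eq R K ==> eq ==> @trunc_eq R K as trunc_eq_natmul.
Proof. by move=> p p' hp m i hi; rewrite !coefMn hp. Qed.

Add Parametric Morphism (R : nzRingType) K : (@GRing.mul {poly R})
  with signature @trunc_eq R K ==> @trunc_eq R K ==> @trunc_eq R K as trunc_eq_mul.
Proof.
move=> p p' hp q q' hq i hi; rewrite !coefM; apply: eq_bigr => j _.
rewrite hp ?hq //; apply: leq_ltn_trans hi; first exact: leq_subr.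
by rewrite -ltnS.
Qed.

Add Parametric Morphism (R : nzRingType) K : (@GRing.exp {poly R})
  with signature @trunc_eq R K ==> eq ==> @trunc_eq R K as trunc_eq_exp.
Proof.
move=> p p' hp m; elim: m => [|m IHm]; first by rewrite !expr0.
by rewrite !exprS IHm hp.
Qed.

Lemma eq_trunc_eq (R : nzRingType) K (p q : {poly R}) : p = q -> trunc_eq K p q.
Proof. by move=> ->. Qed.

Lemma trunc_eq_sum {R : nzRingType} K {I} {r : seq I} {P : pred I}
    {F G : I -> {poly R}} :
  (forall i, P i -> trunc_eq K (F i) (G i)) ->
  trunc_eq K (\sum_(i <- r | P i) F i) (\sum_(i <- r | P i) G i).
Proof. by move=> hFG i hi; rewrite !coef_sum; apply: eq_bigr => j /hFG ->. Qed.

Lemma trunc_eq_XnM (R : nzRingType) K m (p : {poly R}) :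
  (K <= m)%N -> trunc_eq K ('X^m * p) 0.
Proof.
by move=> hKm i hi; rewrite coefXnM coef0 (leq_trans hi hKm).
Qed.

Lemma geometric_sum (R : comPzRingType) (y : R) K :
  (1 - y) * \sum_(t < K) y ^+ t = 1 - y ^+ K.
Proof.
elim: K => [|K IHK]; first by rewrite big_ord0 expr0 mulr0 subrr.
by rewrite big_ord_recr /= mulrDr IHK exprS; ring.
Qed.

Lemma arithmetico_geometric_sum (R : comPzRingType) (y : R) K :
  (1 - y) ^+ 2 * \sum_(c < K) c%:R * y ^+ c
  = y - K%:R * y ^+ K + (K%:R - 1) * y ^+ K.+1.
Proof.
elim: K => [|K IHK]; first by rewrite big_ord0 mulr0 expr0 expr1; ring.
by rewrite big_ord_recr /= mulrDr IHK !exprS -natr1; ring.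
Qed.

Lemma telescope_sumr_ord (V : zmodType) (f : nat -> V) K :
  \sum_(k < K) (f k.+1 - f k) = f K - f 0%N.
Proof. by rewrite -(telescope_sumr _ (leq0n K)) big_mkord. Qed.

Section TruncatedSeries.

Variable R : comNzRingType.
Implicit Types (p : {poly R}) (K k n : nat).

(* Truncations of 1/(1 - q^k) and q^k/(1 - q^k)^2. *)
Definition geom_poly K k : {poly R} := \sum_(t < K) 'X^(k * t).
Definition dgeom_poly K k : {poly R} := \sum_(c < K) c%:R * 'X^(k * c).

Lemma trunc_eq_expXn K k p : (0 < k)%N -> trunc_eq K (('X^k) ^+ K * p) 0.
Proof. by move=> hk; rewrite -exprM trunc_eq_XnM // leq_pmull. Qed.

Lemma geom_polyK K k : (0 < k)%N -> trunc_eq K ((1 - 'X^k) * geom_poly K k) 1.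
Proof.
have -> : geom_poly K k = \sum_(t < K) ('X^k) ^+ t.
  by apply: eq_bigr => t _; rewrite exprM.
by move=> hk; rewrite geometric_sum -[_ ^+ K]mulr1 (trunc_eq_expXn K k 1 hk) subr0.
Qed.

Lemma dgeom_polyK K k :
  (0 < k)%N -> trunc_eq K ((1 - 'X^k) ^+ 2 * dgeom_poly K k) 'X^k.
Proof.
have -> : dgeom_poly K k = \sum_(c < K) c%:R * ('X^k) ^+ c.
  by apply: eq_bigr => c _; rewrite exprM.
move=> hk; rewrite arithmetico_geometric_sum.
have -> : 'X^k - K%:R * ('X^k) ^+ K + (K%:R - 1) * ('X^k) ^+ K.+1
  = 'X^k + ('X^k) ^+ K * ((K%:R - 1) * 'X^k - K%:R) :> {poly R}.
  by rewrite exprS; ring.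
by rewrite (trunc_eq_expXn K k _ hk) addr0.
Qed.

Lemma coef_dgeom_poly K k i :
  (dgeom_poly K k)`_i = \sum_(c < K) ((i == k * c)%N)%:R *+ c.
Proof.
rewrite /dgeom_poly coef_sum; apply: eq_bigr => c _.
by rewrite mulr_natl coefMn coefXn.
Qed.

Definition Xodd n : {poly R} := 'X^((2 * n).+1).
Definition geom_Xodd K n := geom_poly K (2 * n).+1.
Definition dgeom_Xodd K n := dgeom_poly K (2 * n).+1.

Lemma geom_XoddK K n : trunc_eq K ((1 - Xodd n) * geom_Xodd K n) 1.
Proof. exact: geom_polyK. Qed.

Lemma geom_XoddKr K n p : trunc_eq K (p * ((1 - Xodd n) * geom_Xodd K n)) p.
Proof. by rewrite geom_XoddK mulr1. Qed.

Lemma geom_Xodd_sqK K n : trunc_eq K (geom_Xodd K n ^+ 2 * (1 - Xodd n) ^+ 2) 1.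
Proof. by rewrite -exprMn mulrC geom_XoddK expr1n. Qed.

Lemma Xodd_geom_Xodd_sq K n :
  trunc_eq K (Xodd n * geom_Xodd K n ^+ 2) (dgeom_Xodd K n).
Proof.
have XoddE : trunc_eq K ((1 - Xodd n) ^+ 2 * dgeom_Xodd K n) (Xodd n).
  exact: dgeom_polyK.
by rewrite -XoddE mulrC mulrA geom_Xodd_sqK mul1r.
Qed.

(* [Bshift K n] truncates B_n, whose k-th summand is [Bshift_term K n k]. *)
Definition Bshift_term K n k :=
  Xodd n ^+ k * \prod_(n <= j < n + k) (1 + Xodd j)
  * \prod_(n <= j < (n + k).+1) geom_Xodd K j.
Definition Bshift K n := \sum_(k < K) Bshift_term K n k.

Lemma Bshift_term0 K n : Bshift_term K n 0 = geom_Xodd K n.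
Proof. by rewrite /Bshift_term addn0 big_geq // big_nat1 expr0 !mul1r. Qed.

Lemma Bshift_term_high K n : trunc_eq K (Bshift_term K n K) 0.
Proof. by rewrite /Bshift_term -mulrA (trunc_eq_expXn K _ _ (ltn0Sn _)). Qed.

Lemma Bshift_termS K n k :
  trunc_eq K (Bshift_term K n k.+1 * (1 - Xodd (n + k).+1))
             (Bshift_term K n k * Xodd n * (1 + Xodd (n + k))).
Proof.
have -> : Bshift_term K n k.+1 * (1 - Xodd (n + k).+1)
  = Bshift_term K n k * Xodd n * (1 + Xodd (n + k))
    * ((1 - Xodd (n + k).+1) * geom_Xodd K (n + k).+1).
  rewrite /Bshift_term addnS big_nat_recr ?leq_addr //.
  by rewrite [in LHS]big_nat_recr ?leqW ?leq_addr //= exprS; ring.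
by rewrite geom_XoddK mulr1.
Qed.

Lemma Bshift_term_shift K n k :
  Xodd (n + k).+1 * Bshift_term K n k.+1
  = 'X^2 * Xodd n ^+ 2 * (1 + Xodd n) * geom_Xodd K n * Bshift_term K n.+1 k.
Proof.
have shift_prod (F : nat -> {poly R}) m :
    \prod_(n <= j < n + m.+1) F j = F n * \prod_(n.+1 <= j < n.+1 + m) F j.
  by rewrite addSnnS big_ltn // addnS ltnS leq_addr.
have XoddE : Xodd (n + k.+1) * Xodd n ^+ k.+1 = 'X^2 * Xodd n ^+ 2 * Xodd n.+1 ^+ k.
  by rewrite /Xodd -!exprM -!exprD; congr (_ ^+ _); lia.
rewrite /Bshift_term -!addnS !shift_prod !mulrA XoddE; ring.
Qed.

Lemma Bshift_rec K n :
  trunc_eq K ((1 - Xodd n) ^+ 2 * Bshift K n)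
    (1 + Xodd n ^+ 2 + 'X^2 * Xodd n ^+ 2 * (1 + Xodd n) ^+ 2 * Bshift K n.+1).
Proof.
pose u k := (1 - Xodd n) * Bshift_term K n k * (1 - Xodd (n + k)).
pose a k := (1 - Xodd n ^+ 2) * (Xodd (n + k) * Bshift_term K n k).
have u_step k :
    trunc_eq K ((1 - Xodd n) ^+ 2 * Bshift_term K n k) (a k - (u k.+1 - u k)).
  rewrite /u addnS -mulrA Bshift_termS; apply: eq_trunc_eq; rewrite /a; ring.
have a_step k : trunc_eq K
    ('X^2 * Xodd n ^+ 2 * (1 + Xodd n) ^+ 2 * Bshift_term K n.+1 k) (a k.+1).
  have -> : a k.+1 = 'X^2 * Xodd n ^+ 2 * (1 + Xodd n) ^+ 2 * Bshift_term K n.+1 k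
                     * ((1 - Xodd n) * geom_Xodd K n).
    by rewrite /a addnS Bshift_term_shift; ring.
  by rewrite geom_XoddKr.
have u0 : trunc_eq K (u 0%N) (1 - Xodd n).
  have -> : u 0%N = (1 - Xodd n) * ((1 - Xodd n) * geom_Xodd K n).
    by rewrite /u Bshift_term0 addn0; ring.
  exact: geom_XoddKr.
have a0 : trunc_eq K (a 0%N) (Xodd n * (1 + Xodd n)).
  have -> : a 0%N = Xodd n * (1 + Xodd n) * ((1 - Xodd n) * geom_Xodd K n).
    by rewrite /a Bshift_term0 addn0; ring.
  exact: geom_XoddKr.
have uK : trunc_eq K (u K) 0 by rewrite /u Bshift_term_high mulr0 mul0r.
have aK : trunc_eq K (a K) 0 by rewrite /a Bshift_term_high !mulr0.
rewrite /Bshift !mulr_sumr (trunc_eq_sum K (fun (k : 'I_K) _ => u_step k)).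
rewrite (trunc_eq_sum K (fun (k : 'I_K) _ => a_step k)) sumrB telescope_sumr_ord.
have -> : \sum_(k < K) a k.+1 = \sum_(k < K.+1) a k - a 0%N.
  by rewrite big_ord_recl addrC addKr; apply: eq_bigr => k _; rewrite lift0.
rewrite big_ord_recr /= uK u0 aK a0; apply: eq_trunc_eq; ring.
Qed.

Definition Bhead K n := geom_Xodd K n ^+ 2 * (1 + Xodd n ^+ 2).
Definition Bfactor K n :=
  geom_Xodd K n ^+ 2 * ('X^2 * Xodd n ^+ 2 * (1 + Xodd n) ^+ 2).
Definition Bweight K n := \prod_(j < n) Bfactor K j.

Lemma Bshift_unfold K n :
  trunc_eq K (Bshift K n) (Bhead K n + Bfactor K n * Bshift K n.+1).
Proof.
rewrite -[Bshift K n]mul1r -(geom_Xodd_sqK K n) -mulrA Bshift_rec.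
by apply: eq_trunc_eq; rewrite /Bhead /Bfactor; ring.
Qed.

Lemma Bshift_iter K L : trunc_eq K (Bshift K 0)
  (\sum_(n < L) Bweight K n * Bhead K n + Bweight K L * Bshift K L).
Proof.
elim: L => [|L IHL]; first by rewrite big_ord0 /Bweight big_ord0 add0r mul1r.
rewrite IHL Bshift_unfold /Bweight !big_ord_recr /=.
by apply: eq_trunc_eq; ring.
Qed.

Lemma Bweight_high K p : trunc_eq K (Bweight K K * p) 0.
Proof.
have -> : Bweight K K = 'X^(2 * K) * \prod_(j < K)
    (geom_Xodd K j ^+ 2 * (Xodd j ^+ 2 * (1 + Xodd j) ^+ 2)).
  rewrite /Bweight exprM -[in X in X * _](card_ord K) -prodr_const -big_split /=.
  by apply: eq_bigr => j _; rewrite /Bfactor; ring.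
by rewrite -mulrA trunc_eq_XnM // leq_pmull.
Qed.

Lemma Bshift0_expand K :
  trunc_eq K (Bshift K 0) (\sum_(n < K) Bweight K n * Bhead K n).
Proof. by rewrite (Bshift_iter K K) Bweight_high addr0. Qed.

Lemma Bhead_trunc K n : trunc_eq K (Bhead K n) (1 + dgeom_Xodd K n *+ 2).
Proof.
have -> : Bhead K n
  = geom_Xodd K n ^+ 2 * (1 - Xodd n) ^+ 2 + (Xodd n * geom_Xodd K n ^+ 2) *+ 2.
  by rewrite /Bhead; ring.
by rewrite geom_Xodd_sqK Xodd_geom_Xodd_sq.
Qed.

Lemma Bfactor_trunc K n :
  trunc_eq K (Bfactor K n) ('X^2 * Xodd n ^+ 2 * (1 + dgeom_Xodd K n *+ 4)).
Proof.
have -> : Bfactor K n = 'X^2 * Xodd n ^+ 2 *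
    (geom_Xodd K n ^+ 2 * (1 - Xodd n) ^+ 2 + (Xodd n * geom_Xodd K n ^+ 2) *+ 4).
  by rewrite /Bfactor; ring.
by rewrite geom_Xodd_sqK Xodd_geom_Xodd_sq.
Qed.

Lemma Bweight_trunc K n : trunc_eq K (Bweight K n)
  ('X^(2 * n * n.+1) * \prod_(j < n) (1 + dgeom_Xodd K j *+ 4)).
Proof.
elim: n => [|n IHn]; first by rewrite /Bweight !big_ord0 mulr1 muln0 expr0.
rewrite /Bweight big_ord_recr /= -/(Bweight K n) IHn Bfactor_trunc big_ord_recr /=.
have -> : 'X^(2 * n.+1 * n.+2) = 'X^(2 * n * n.+1) * 'X^2 * Xodd n ^+ 2 :> {poly R}.
  by rewrite /Xodd -exprM -!exprD; congr (_ ^+ _); lia.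
by apply: eq_trunc_eq; ring.
Qed.

End TruncatedSeries.

Lemma dvdz_coef_dgeom_poly K k d i : coprime d k -> (d %| i)%N ->
  (d%:Z %| (dgeom_poly int K k)`_i)%Z.
Proof.
move=> dk di; rewrite coef_dgeom_poly; apply: rpred_sum => c _.
case: eqP => [ikc | _]; last by rewrite mul0rn dvdz0.
by rewrite mulr1n natz dvdzE !absz_nat -(Gauss_dvdr _ dk) -ikc.
Qed.

Lemma dvdz2_coef_dgeom_Xodd K n i : ~~ odd i -> (2 %| (dgeom_Xodd int K n)`_i)%Z.
Proof.
move=> ei; apply: (dvdz_coef_dgeom_poly K _ 2); rewrite ?dvdn2 //.
by rewrite coprime2n /= mul2n odd_double.
Qed.

Lemma dvdz4_coef_dgeom_Xodd K n i : (4 %| i)%N -> (4 %| (dgeom_Xodd int K n)`_i)%Z.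
Proof.
move=> i4; apply: (dvdz_coef_dgeom_poly K _ 4) => //.
by rewrite (_ : 4 = 2 ^ 2)%N // coprime_pexpl // coprime2n /= mul2n odd_double.
Qed.

Lemma dvdz_mulrn (y : int) (d m : nat) : (d %| m)%N -> (d%:Z %| y *+ m)%Z.
Proof. by move=> dm; rewrite -mulr_natr natz dvdz_mull // dvdzE. Qed.

Lemma prod_1_add4_dgeom_Xodd K n : exists2 T : {poly int},
  \prod_(j < n) (1 + dgeom_Xodd int K j *+ 4) = 1 + T *+ 4
  & forall i, ~~ odd i -> (2 %| T`_i)%Z.
Proof.
elim: n => [|n [T ET evenT]].
  by exists 0; rewrite ?big_ord0 ?mul0rn ?addr0 // => i _; rewrite coef0 dvdz0.
exists (T + dgeom_Xodd int K n + (T * dgeom_Xodd int K n) *+ 4).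
  by rewrite big_ord_recr /= ET; ring.
move=> i ei; rewrite coefD coefMn coefD.
apply: rpredD; first by rewrite rpredD ?evenT ?dvdz2_coef_dgeom_Xodd.
exact: (dvdz_mulrn _ 2 4).
Qed.

Lemma coef_Bweight_Bhead_mod8 K n e : (e < K)%N -> (4 %| e)%N ->
  (8 %| (Bweight int K n * Bhead int K n)`_e - ((e == 2 * n * n.+1)%N)%:R)%Z.
Proof.
move=> eK e4; have [T ET evenT] := prod_1_add4_dgeom_Xodd K n.
pose D := dgeom_Xodd int K n.
have WA : trunc_eq K (Bweight int K n * Bhead int K n)
    ('X^(2 * n * n.+1) * (1 + D *+ 2 + (T + (T * D) *+ 2) *+ 4)).
  by rewrite Bweight_trunc Bhead_trunc ET; apply: eq_trunc_eq; rewrite /D; ring.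
rewrite (WA e eK) coefXnM; case: ltnP => [e_lt | e_ge].
  by rewrite (ltn_eqF e_lt) subrr dvdz0.
have m4 : (4 %| 2 * n * n.+1)%N.
  by rewrite -mulnA (_ : 4 = 2 * 2)%N // dvdn_pmul2l // dvdn2 oddM oddS; case: (odd n).
have i4 : (4 %| e - 2 * n * n.+1)%N by rewrite dvdn_sub.
have dvd8 (u v w : int) : (4 %| u)%Z -> (2 %| v)%Z -> (8 %| w + u *+ 2 + v *+ 4 - w)%Z.
  by move=> /dvdzP[x ->] /dvdzP[y ->]; apply/dvdzP; exists (x + y); ring.
rewrite coefD coefMn coefD coef1 coefMn subn_eq0 eqn_leq e_ge andbT.
apply: dvd8; first exact: dvdz4_coef_dgeom_Xodd.
rewrite coefD coefMn; apply: rpredD; last exact: (dvdz_mulrn _ 2 2).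
by apply: evenT; rewrite -dvdn2 (dvdn_trans _ i4).
Qed.

Definition ps_trunc K (f : ps) (p : {poly int}) := forall i, (i < K)%N -> f i = p`_i.

Lemma ps_trunc_mul K f g p q :
  ps_trunc K f p -> ps_trunc K g q -> ps_trunc K (pmul f g) (p * q).
Proof.
move=> fp gq i iK; rewrite /pmul coefM; apply: eq_bigr => j _.
rewrite fp ?gq //; apply: leq_ltn_trans iK; first exact: leq_subr.
by rewrite -ltnS.
Qed.

Lemma ps_trunc_pprod K (s : seq nat) (F : nat -> ps) (P : nat -> {poly int}) :
  (forall j, ps_trunc K (F j) (P j)) ->
  ps_trunc K (pprod [seq F j | j <- s]) (\prod_(j <- s) P j).
Proof.
move=> FP; elim: s => [|j s IHs]; first by move=> i _; rewrite big_nil coef1.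
by rewrite big_cons; apply: ps_trunc_mul.
Qed.

Lemma ps_trunc_geom K k : (0 < k)%N -> ps_trunc K (geom k) (geom_poly int K k).
Proof.
move=> k0 i iK; rewrite /geom /geom_poly coef_sum.
under eq_bigr do rewrite coefXn.
have [/dvdnP[t i_tk] | ndvd] := boolP (k %| i)%N.
  rewrite i_tk in iK *.
  have tK : (t < K)%N by apply: leq_ltn_trans iK; rewrite leq_pmulr.
  rewrite (bigD1 (Ordinal tK)) //= mulnC eqxx big1 ?addr0 // => t' t't.
  case: eqP => // /eqP; rewrite eqn_mul2l gtn_eqF //= => /eqP tt'.
  by case/eqP: t't; apply: val_inj.
rewrite big1 // => t _; case: eqP => // it.
by case/negP: ndvd; rewrite it dvdn_mulr.
Qed.

Lemma ps_trunc_Bterm K m : ps_trunc K (Bterm m) (Bshift_term int K 0 m).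
Proof.
have -> : Bshift_term int K 0 m = 'X^m * ((\prod_(j <- iota 0 m) (1 + 'X^((2 * j).+1)))
    * \prod_(j <- iota 0 m.+1) geom_poly int K (2 * j).+1).
  by rewrite /Bshift_term /index_iota !subn0 /Xodd muln0 expr1 mulrA.
apply: ps_trunc_mul; first by move=> i _; rewrite coefXn.
apply: ps_trunc_mul; apply: ps_trunc_pprod => j; last exact: ps_trunc_geom.
by move=> i _; rewrite coefD coef1 coefXn.
Qed.

Lemma b_coef_Bshift e : b e = (Bshift int e.+1 0)`_e.
Proof. by rewrite /b /Bshift coef_sum; apply: eq_bigr => m _; apply: ps_trunc_Bterm. Qed.

Lemma dvd8_b e : (4 %| e)%N -> (forall s, 2 * e + 1 != s ^ 2)%N -> (8 %| b e)%Z.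
Proof.
move=> e4 e_nsq; rewrite b_coef_Bshift (Bshift0_expand int e.+1 e (ltnSn e)) coef_sum.
apply: rpred_sum => -[n ?] _; have := coef_Bweight_Bhead_mod8 e.+1 n e (ltnSn e) e4.
suff -> : (e == 2 * n * n.+1)%N = false by rewrite subr0.
apply/eqP => en; have /eqP[] := e_nsq (2 * n).+1; rewrite en; ring.
Qed.

Lemma odd_sqr_mod8 P : odd P -> (P ^ 2 = 1 %[mod 8])%N.
Proof.
move=> oP; rewrite -(odd_double_half P) oP.
have /dvdnP[u tu] : (2 %| P./2 * P./2.+1)%N by rewrite dvdn2 oddM oddS andbN.
have -> : ((true + (P./2).*2) ^ 2 = u * 8 + 1)%N by rewrite -mul2n; nia.
by rewrite modnMDl.
Qed.

Lemma legendre_nonresidue a p : (0 < p)%N -> legendre a p = -1 ->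
  forall c, (c ^ 2 != a %[mod p])%N.
Proof.
move=> p0; rewrite /legendre; case: ifP => // _; case: ifP => // /negbT /existsPn nsq _ c.
by have := nsq (Ordinal (ltn_pmod c p0)); rewrite /= modnXm.
Qed.

Lemma sqr_mul_nonsquare P M : (0 < P)%N -> (forall c, M != c ^ 2)%N ->
  forall s, (P ^ 2 * M != s ^ 2)%N.
Proof.
move=> P0 M_nsq s; apply/eqP => PMs.
have /dvdnP[c s_cP] : (P %| s)%N by rewrite -(@dvdn_pexp2r _ _ 2) // -PMs dvdn_mulr.
move: PMs; rewrite s_cP expnMn mulnC => /eqP.
by rewrite eqn_pmul2r ?expn_gt0 ?P0 // (negbTE (M_nsq c)).
Qed.

Lemma index_double_add1 p l n k : odd p ->
  (2 * (4 * p ^ (2 * k + 3) * n + ((8 * l + 1) * p ^ (2 * k + 2) - 1) %/ 2) + 1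
   = (p ^ k.+1) ^ 2 * (8 * p * n + 8 * l + 1))%N.
Proof.
move=> op; set Q := ((8 * l + 1) * p ^ (2 * k + 2))%N.
have oQ : odd Q by rewrite oddM oddD oddM /= oddX op orbT.
have halfQ : ((Q - 1) %/ 2 = Q./2)%N.
  by rewrite -{1}(odd_double_half Q) oQ add1n subSS subn0 -muln2 mulnK.
have P2 : ((p ^ k.+1) ^ 2 = p ^ (2 * k + 2))%N by rewrite -expnM; congr (p ^ _)%N; lia.
have P3 : (p ^ (2 * k + 3) = p * p ^ (2 * k + 2))%N.
  by rewrite -expnS; congr (p ^ _)%N; lia.
have Q2 : (2 * Q./2 + 1 = Q)%N.
  by rewrite mul2n addnC -[in RHS](odd_double_half Q) oQ.
rewrite halfQ P2 P3; move: Q2; rewrite /Q; nia.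
Qed.

Lemma dvd4_index p l n k : odd p ->
  (4 %| 4 * p ^ (2 * k + 3) * n + ((8 * l + 1) * p ^ (2 * k + 2) - 1) %/ 2)%N.
Proof.
move=> op; set e := (_ + _)%N.
have e_mod8 : (2 * e + 1 = 1 %[mod 8])%N.
  rewrite index_double_add1 // -modnMm odd_sqr_mod8 ?oddX ?op //.
  by rewrite (_ : 8 * p * n + 8 * l + 1 = (p * n + l) * 8 + 1)%N ?modnMDl //; lia.
by move: e_mod8; lia.
Qed.

Theorem corollary1p8 (p l : nat) :
  prime p -> odd p -> (1 <= l <= p.-1)%N ->
  legendre (8 * l + 1) p = -1 ->
  forall n k : nat,
    (8 %| b (4 * p ^ (2 * k + 3) * n + ((8 * l + 1) * p ^ (2 * k + 2) - 1) %/ 2))%Z.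
Proof.
move=> p_pr p_odd _ leg n k; have p0 := prime_gt0 p_pr.
apply: dvd8_b; first exact: dvd4_index.
rewrite index_double_add1 //; apply: sqr_mul_nonsquare; first by rewrite expn_gt0 p0.
move=> c; apply/eqP => M_sq; move/eqP: (legendre_nonresidue _ _ p0 leg c); apply.
rewrite -M_sq.
by rewrite (_ : 8 * p * n + 8 * l + 1 = 8 * n * p + (8 * l + 1))%N ?modnMDl //; lia.
Qed.
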